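(* Let $M\in\mathbb{R}^{n\times n}$ be symmetric with eigenvalues ordered so that $|\lambda_1|\ge|\lambda_2|\ge\cdots$, where $\lambda=\lambda_1>0$ and $\lambda_1>|\lambda_2|$. Let $u$ be the unit leading eigenvector, $l_2=|\lambda_2|/\lambda$, and $0<\theta\le\frac1{40}(1-l_2)^{3/2}$. Let $\{S^{(\ell)}\}_{\ell\ge1}$ be i.i.d. random $n\times n$ matrices such that: - $\mathbb{E}[S^{(\ell)}]=M$; - $\|S^{(\ell)}-M\|_2\le\theta\|M\|_2$; - $S^{(\ell)}$ is almost surely non-singular; - no proper subspace $V$ satisfies $S^{(\ell)}V\subseteq V$ almost surely. Define $\mathsf G=\{\mathbf x\in\mathsf P_n: d(\mathbf x,\mathbf u)\le 2\theta/(1-l_2)\}$, where $\mathbf u$ is the class of $u$. Then: 1. For any $\mathbf x\in\mathsf G$, $S^{(\ell)}\mathbf x\in\mathsf G$. 2. With $\rho\equiv1-\frac45(1-l_2)\in(0,1)$, for any $\mathbf x\ne\mathbf y\in\mathsf G$, $$\mathbb{E}\,d(S^{(\ell)}\mathbf x,S^{(\ell)}\mathbf y)\le\rho\,d(\mathbf x,\mathbf y).$$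
   Context: $\mathsf P_n$ is the projective space (unit vectors of $\mathbb{R}^n$ modulo sign), with metric $d(\mathbf x,\mathbf y)=\sqrt{1-\langle x,y\rangle^2}$ for unit representatives $x,y$. An invertible matrix $S$ acts on $\mathsf P_n$ by mapping the class of $x$ to the class of $Sx/\|Sx\|$. $\|\cdot\|_2$ is the operator norm. *)

From HB Require Import structures.
From mathcomp Require Import all_boot all_order all_algebra.
From mathcomp Require Import all_classical all_reals all_analysis.
Set Implicit Arguments. Unset Strict Implicit. Unset Printing Implicit Defensive.
Import Order.TTheory GRing.Theory Num.Theory.
Local Open Scope ring_scope.

Section Defs.
Variables (R : realType) (n : nat).

Definition dotv (x y : 'cV[R]_n) : R := \sum_i x i 0 * y i 0.
Definition vnorm (x : 'cV[R]_n) : R := Num.sqrt (dotv x x).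

Definition opnorm (A : 'M[R]_n) : R :=
  sup [set vnorm (A *m x) | x in [set x : 'cV[R]_n | vnorm x = 1]].

(* Points of P_n are represented by unit vectors; all notions below are
   invariant under x |-> -x. *)
Definition unitv (x : 'cV[R]_n) : Prop := vnorm x = 1.

Definition pdist (x y : 'cV[R]_n) : R := Num.sqrt (1 - dotv x y ^+ 2).

Definition pact (S : 'M[R]_n) (x : 'cV[R]_n) : 'cV[R]_n :=
  (vnorm (S *m x))^-1 *: (S *m x).

(* V (row space of a matrix, column vectors = transposed rows) is invariant
   under x |-> S x *)
Definition invariant_sub (V S : 'M[R]_n) : bool := (V *m S^T <= V)%MS.

Definition nontriv_proper_subsp (V : 'M[R]_n) : bool := (0 < \rank V)%N && (\rank V < n)%N.

End Defs.

From HB Require Import structures.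
From mathcomp Require Import all_boot all_order all_algebra.
From mathcomp Require Import all_classical all_reals all_analysis.
From mathcomp Require Import ring lra.
Import Order.TTheory GRing.Theory Num.Theory.
Set Implicit Arguments. Unset Strict Implicit. Unset Printing Implicit Defensive.
Local Open Scope ring_scope.

(* Write S = M + E with |E v| <= theta lam |v|, where lam = lam 0 and l = l2.  For a
   unit x in the ball G of radius r = 2 theta / (1 - l) around u, the coordinate
   <Sx, u> stays within theta lam of lam <x, u>, while the part of Sx orthogonal to u
   has norm at most lam (l r + theta); this keeps Sx in G.  For x, y in G put
   z = y - s x, with s chosen so that z is orthogonal to u: then Sy - s Sx = Sz has
   norm at most (l + theta) lam |z|, and the Gram bound
   |a|^2 |b|^2 - <a,b>^2 <= |a|^2 |b - s a|^2 turns this into d(Sx, Sy) <= rho d(x, y).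
   Both facts hold for every S with ||S - M|| <= theta ||M||, hence almost surely, and
   the contraction passes to the expectation. *)

Section Euclid.
Variables (R : realType) (m : nat).
Implicit Types (x y z u v : 'cV[R]_m) (a b k : R).
Local Notation dot := (@dotv R m).

Lemma dotvC x y : dot x y = dot y x.
Proof. by apply: eq_bigr => i _; rewrite mulrC. Qed.

Lemma dotvDl x y z : dot (x + y) z = dot x z + dot y z.
Proof. by rewrite /dotv -big_split; apply: eq_bigr => i _; rewrite mxE mulrDl. Qed.

Lemma dotvZl a x y : dot (a *: x) y = a * dot x y.
Proof. by rewrite /dotv mulr_sumr; apply: eq_bigr => i _; rewrite mxE mulrA. Qed.

Lemma dotvBl x y z : dot (x - y) z = dot x z - dot y z.
Proof. by rewrite dotvDl -scaleN1r dotvZl mulN1r. Qed.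

Lemma dotvZr a x y : dot x (a *: y) = a * dot x y.
Proof. by rewrite dotvC dotvZl dotvC. Qed.

Lemma dotvDr x y z : dot x (y + z) = dot x y + dot x z.
Proof. by rewrite dotvC dotvDl !(dotvC x). Qed.

Lemma dotv_lin2 a b a' b' x y x' y' :
  dot (a *: x + b *: y) (a' *: x' + b' *: y') =
  a * a' * dot x x' + a * b' * dot x y' + b * a' * dot y x' + b * b' * dot y y'.
Proof. by rewrite !dotvDl !dotvDr !dotvZl !dotvZr; ring. Qed.

Lemma dotv_ge0 x : 0 <= dot x x.
Proof. by apply: sumr_ge0 => i _; rewrite -expr2 sqr_ge0. Qed.

Lemma dotv0l x : dot 0 x = 0.
Proof. by rewrite -(scale0r 0) dotvZl mul0r. Qed.

Lemma dotv_eq0 x : (dot x x == 0) = (x == 0).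
Proof.
apply/eqP/eqP => [x0|->]; last exact: dotv0l.
apply/matrixP => i j; rewrite ord1 mxE; apply/eqP.
have sq0 (l : 'I_m) : xpredT l -> 0 <= x l 0 * x l 0 by rewrite -expr2 sqr_ge0.
by have /eqP := psumr_eq0P sq0 x0 (i := i) isT; rewrite mulf_eq0 orbb.
Qed.

Lemma dotv_mulmx (A : 'M[R]_m) x y : dot (A *m x) y = dot x (A^T *m y).
Proof.
rewrite /dotv; under eq_bigr do rewrite mxE big_distrl.
rewrite exchange_big; apply: eq_bigr => j _; rewrite mxE big_distrr.
by apply: eq_bigr => i _; rewrite /= mxE; ring.
Qed.

Lemma dotv_orthomx (A : 'M[R]_m) x y : A^T *m A = 1%:M -> dot (A *m x) (A *m y) = dot x y.
Proof. by move=> AA; rewrite dotv_mulmx mulmxA AA mul1mx. Qed.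

Lemma gram_identity x y k :
  dot x x * dot (y - k *: x) (y - k *: x) =
  dot x x * dot y y - dot x y ^+ 2 + (k * dot x x - dot x y) ^+ 2.
Proof.
have -> : y - k *: x = 1 *: y + (- k) *: x by rewrite scale1r scaleNr.
by rewrite dotv_lin2 (dotvC y x); ring.
Qed.

Lemma gram_le x y k :
  dot x x * dot y y - dot x y ^+ 2 <= dot x x * dot (y - k *: x) (y - k *: x).
Proof. by rewrite gram_identity lerDl sqr_ge0. Qed.

Lemma sqr_dotv_le x y : dot x y ^+ 2 <= dot x x * dot y y.
Proof.
have [/eqP|xx0] := eqVneq (dot x x) 0.
  by rewrite dotv_eq0 => /eqP->; rewrite !dotv0l expr0n mul0r.
have := gram_identity x y (dot x y / dot x x).
rewrite divfK // subrr expr0n addr0 /= => eq_gram.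
by rewrite -subr_ge0 -eq_gram mulr_ge0 ?dotv_ge0.
Qed.

Lemma vnorm_ge0 x : 0 <= vnorm x.
Proof. exact: sqrtr_ge0. Qed.

Lemma vnorm_sqr x : vnorm x ^+ 2 = dot x x.
Proof. by rewrite sqr_sqrtr // dotv_ge0. Qed.

Lemma vnorm_gt0 x : 0 < dot x x -> 0 < vnorm x.
Proof. by rewrite sqrtr_gt0. Qed.

Lemma unitvP x : unitv x <-> dot x x = 1.
Proof.
rewrite /unitv -vnorm_sqr; split=> [->|/eqP]; first by rewrite expr1n.
by rewrite sqrp_eq1 ?vnorm_ge0 // => /eqP.
Qed.

Lemma vnormZ a x : vnorm (a *: x) = `|a| * vnorm x.
Proof. by rewrite /vnorm dotvZl dotvZr mulrA -expr2 sqrtrM ?sqr_ge0 // sqrtr_sqr. Qed.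

Lemma normr_dotv_le x y : `|dot x y| <= vnorm x * vnorm y.
Proof.
rewrite -ler_sqr ?nnegrE ?mulr_ge0 ?vnorm_ge0 // real_normK ?num_real //.
by rewrite exprMn !vnorm_sqr sqr_dotv_le.
Qed.

Lemma vnormD x y : vnorm (x + y) <= vnorm x + vnorm y.
Proof.
rewrite -ler_sqr ?nnegrE ?addr_ge0 ?vnorm_ge0 //.
rewrite vnorm_sqr dotvDl !dotvDr (dotvC y x) sqrrD !vnorm_sqr.
by have := le_trans (ler_norm _) (normr_dotv_le x y); lra.
Qed.

Section Projection.
Variable u : 'cV[R]_m.
Hypothesis u_unit : dot u u = 1.

Lemma dotv_sub_proj v : dot (v - dot v u *: u) u = 0.
Proof. by rewrite dotvBl dotvZl u_unit mulr1 subrr. Qed.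

Lemma dotv_sub_proj2 v w :
  dot (v - dot v u *: u) (w - dot w u *: u) = dot v w - dot v u * dot w u.
Proof.
have sub_proj z : z - dot z u *: u = 1 *: z + (- dot z u) *: u by rewrite scale1r scaleNr.
by rewrite !sub_proj dotv_lin2 u_unit (dotvC u w); ring.
Qed.

Lemma dotv_proj_decomp v :
  dot v v = dot v u ^+ 2 + dot (v - dot v u *: u) (v - dot v u *: u).
Proof. by rewrite dotv_sub_proj2; ring. Qed.

Lemma vnorm_sub_proj_le v : vnorm (v - dot v u *: u) <= vnorm v.
Proof. by rewrite ler_sqrt ?dotv_ge0 // [leRHS]dotv_proj_decomp lerDr sqr_ge0. Qed.

Lemma sqr_dotv_unit_le v : dot v v = 1 -> dot v u ^+ 2 <= 1.
Proof. by move=> v1; have := sqr_dotv_le v u; rewrite v1 u_unit mulr1. Qed.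

End Projection.

End Euclid.

Section OperatorNorm.
Variables (R : realType) (m : nat) (x0 : 'cV[R]_m).
Hypothesis x0_unit : unitv x0.
Local Notation dot := (@dotv R m).

Lemma vnorm_mulmx_le_frobenius (A : 'M[R]_m) x : unitv x ->
  vnorm (A *m x) <= Num.sqrt (\sum_i dot (row i A)^T (row i A)^T).
Proof.
move=> /unitvP x1; rewrite ler_sqrt ?sumr_ge0 // => [|i _]; last exact: dotv_ge0.
apply: ler_sum => i _; rewrite -expr2.
have -> : (A *m x) i 0 = dot (row i A)^T x.
  by rewrite mxE; apply: eq_bigr => j _; rewrite !mxE.
by have := sqr_dotv_le (row i A)^T x; rewrite x1 mulr1.
Qed.

Lemma opnorm_ge (A : 'M[R]_m) x : unitv x -> vnorm (A *m x) <= opnorm A.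
Proof.
move=> x1; apply: sup_upper_bound; last by exists x.
split; first by exists (vnorm (A *m x0)), x0.
exists (Num.sqrt (\sum_i dot (row i A)^T (row i A)^T)) => _ [y y1 <-].
exact: vnorm_mulmx_le_frobenius.
Qed.

Lemma opnorm_le (A : 'M[R]_m) c :
  (forall x, unitv x -> vnorm (A *m x) <= c) -> opnorm A <= c.
Proof.
move=> Ac; apply: ge_sup; first by exists (vnorm (A *m x0)), x0.
by move=> _ [y y1 <-]; exact: Ac.
Qed.

Lemma vnorm_mulmx_le (A : 'M[R]_m) c v :
  opnorm A <= c -> vnorm (A *m v) <= c * vnorm v.
Proof.
move=> Ac; have [->|v0] := eqVneq v 0.
  by rewrite mulmx0 /vnorm dotv0l sqrtr0 mulr0.
have vp : 0 < vnorm v by rewrite vnorm_gt0 // lt_def dotv_eq0 v0 dotv_ge0.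
set w := (vnorm v)^-1 *: v.
have w1 : vnorm w = 1 by rewrite vnormZ ger0_norm ?invr_ge0 ?ltW // mulVf ?gt_eqF.
have vw : v = vnorm v *: w by rewrite scalerA divff ?scale1r ?gt_eqF.
rewrite [in A *m v]vw -scalemxAr vnormZ ger0_norm ?vnorm_ge0 // mulrC.
by rewrite ler_wpM2r ?vnorm_ge0 // (le_trans (opnorm_ge A w1)).
Qed.

End OperatorNorm.

Section ProjectiveAction.
Variables (R : realType) (m : nat).
Implicit Types (x y u : 'cV[R]_m).
Local Notation dot := (@dotv R m).

Lemma dotv_pact (A : 'M[R]_m) x y :
  dot (pact A x) (pact A y) = dot (A *m x) (A *m y) / (vnorm (A *m x) * vnorm (A *m y)).
Proof. by rewrite /pact dotvZl dotvZr invfM; ring. Qed.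

Lemma dotv_pactl (A : 'M[R]_m) x y : dot (pact A x) y = dot (A *m x) y / vnorm (A *m x).
Proof. by rewrite /pact dotvZl mulrC. Qed.

Lemma pact_unit (A : 'M[R]_m) x : 0 < dot (A *m x) (A *m x) -> dot (pact A x) (pact A x) = 1.
Proof.
by move=> ax0; rewrite dotv_pact -expr2 vnorm_sqr divff // gt_eqF.
Qed.

Lemma sin2_pact_le (A : 'M[R]_m) x y (s : R) :
  0 < dot (A *m x) (A *m x) -> 0 < dot (A *m y) (A *m y) ->
  1 - dot (pact A x) (pact A y) ^+ 2 <=
  dot (A *m (y - s *: x)) (A *m (y - s *: x)) / dot (A *m y) (A *m y).
Proof.
rewrite dotv_pact expr_div_n exprMn !vnorm_sqr mulmxBr -scalemxAr.
move: (A *m x) (A *m y) => a b a0 b0.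
have -> : 1 - dot a b ^+ 2 / (dot a a * dot b b) =
    (dot a a * dot b b - dot a b ^+ 2) / dot a a / dot b b.
  by field; rewrite !gt_eqF.
by rewrite ler_pM2r ?invr_gt0 // ler_pdivrMr // [leRHS]mulrC gram_le.
Qed.

(* No hypothesis [dot x u != 0] is needed: then the coefficient is [_ / 0 = 0]. *)
Lemma sin2_orth_le x y u : dot x x = 1 -> dot y y = 1 -> dot u u = 1 ->
  dot x u ^+ 2 * dot (y - (dot y u / dot x u) *: x) (y - (dot y u / dot x u) *: x) <=
  1 - dot x y ^+ 2.
Proof.
move=> x1 y1 u1; set cx := dot x u; set cy := dot y u; set g := dot x y.
have g2 : g ^+ 2 <= 1 by have := sqr_dotv_le x y; rewrite x1 y1 mulr1.
have [->|cx0] := eqVneq cx 0; first by rewrite expr0n mul0r subr_ge0.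
have := gram_identity x y (cy / cx); rewrite x1 y1 !mul1r mulr1 -/g => ->.
have -> : cx ^+ 2 * (1 - g ^+ 2 + (cy / cx - g) ^+ 2) =
    (cy - g * cx) ^+ 2 + cx ^+ 2 * (1 - g ^+ 2) by field.
have : (cy - g * cx) ^+ 2 <= (1 - g ^+ 2) * (1 - cx ^+ 2).
  have := sqr_dotv_le (y - dot y x *: x) (u - dot u x *: x).
  by rewrite !dotv_sub_proj2 // y1 u1 !(dotvC _ x) -/g -/cx -/cy -!expr2.
nra.
Qed.

End ProjectiveAction.

Lemma vnorm_diag_le (R : realType) (m : nat) (d : 'I_m -> R) (k : R) (v : 'cV[R]_m) :
  (forall i, v i 0 != 0 -> `|d i| <= k) ->
  vnorm (diag_mx (\row_i d i) *m v) <= k * vnorm v.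
Proof.
move=> dk; have [k0|k0] := ltP k 0.
  suff -> : v = 0 by rewrite mulmx0 /vnorm dotv0l sqrtr0 mulr0.
  apply/matrixP => i j; rewrite ord1 mxE; apply: contraTeq k0 => /dk dik.
  by rewrite -leNgt (le_trans _ dik).
rewrite -(ger0_norm k0) -sqrtr_sqr -sqrtrM ?sqr_ge0 // ler_sqrt ?mulr_ge0 ?sqr_ge0 ?dotv_ge0 //.
rewrite /dotv mulr_sumr; apply: ler_sum => i _; rewrite mul_diag_mx !mxE.
have [->|/dk dik] := eqVneq (v i 0) 0; first by rewrite !mulr0.
rewrite mulrACA -expr2 ler_wpM2r -?expr2 ?sqr_ge0 //.
by rewrite -(real_normK (num_real (d i))) ler_sqr ?nnegrE ?normr_ge0 // (le_trans _ dik).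
Qed.

Section Spectral.
Variables (R : realType) (n : nat) (M Q : 'M[R]_n.+2) (lam : 'I_n.+2 -> R).
Hypotheses (Q_orth : Q^T *m Q = 1%:M) (M_diag : M = Q *m diag_mx (\row_i lam i) *m Q^T)
  (lam_sorted : forall i j : 'I_n.+2, (i <= j)%N -> `|lam j| <= `|lam i|).
Local Notation u := (col 0 Q).
Local Notation D := (diag_mx (\row_i lam i)).

Lemma trmx_mulmx_colE (v : 'cV[R]_n.+2) i : (Q^T *m v) i 0 = dotv (col i Q) v.
Proof. by rewrite mxE; apply: eq_bigr => j _; rewrite !mxE. Qed.

Lemma col0_unit : dotv u u = 1.
Proof.
rewrite colE dotv_orthomx // /dotv (bigD1 0) //= big1 => [|i /negPf i0].
  by rewrite !mxE eqxx mulr1 addr0.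
by rewrite !mxE i0 mulr0.
Qed.

Lemma mulmx_col0 : M *m u = lam 0 *: u.
Proof.
have De0 : D *m delta_mx 0 0 = lam 0 *: (delta_mx 0 0 : 'cV[R]_n.+2).
  by apply/matrixP => i j; rewrite mul_diag_mx !mxE; case: eqP => [->|]; rewrite ?mulr1 ?mulr0.
by rewrite colE M_diag -!mulmxA (mulmxA Q^T) Q_orth mul1mx De0 scalemxAr.
Qed.

Lemma vnorm_trmx_mulmx v : vnorm (Q^T *m v) = vnorm v.
Proof. by rewrite /vnorm dotv_orthomx // trmxK (mulmx1C Q_orth). Qed.

Lemma vnorm_mulmx_eigen v : vnorm (M *m v) = vnorm (D *m (Q^T *m v)).
Proof.
have QQ : Q *m Q^T = 1%:M := mulmx1C Q_orth.
by rewrite /vnorm M_diag -!mulmxA dotv_orthomx.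
Qed.

Lemma vnorm_mulmx_spec_le v : vnorm (M *m v) <= `|lam 0| * vnorm v.
Proof.
rewrite vnorm_mulmx_eigen -[vnorm v]vnorm_trmx_mulmx.
by apply: vnorm_diag_le => i _; exact: lam_sorted.
Qed.

Lemma vnorm_mulmx_orth_le z : dotv z u = 0 -> vnorm (M *m z) <= `|lam 1| * vnorm z.
Proof.
move=> zu; rewrite vnorm_mulmx_eigen -[vnorm z]vnorm_trmx_mulmx.
apply: vnorm_diag_le => i; rewrite trmx_mulmx_colE.
have [->|i0 _] := eqVneq i 0; first by rewrite dotvC zu eqxx.
by apply: lam_sorted; move: i0; rewrite -(inj_eq val_inj) /= lt0n.
Qed.

End Spectral.

Lemma sqrtr_leE (R : rcfType) (a b : R) : 0 <= b -> (Num.sqrt a <= b) = (a <= b ^+ 2).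
Proof. by move=> b0; rewrite -[X in _ <= X](ger0_norm b0) -sqrtr_sqr ler_sqrt ?sqr_ge0. Qed.

Lemma norm_ge_perturbed (R : realType) (lam th k c a : R) : 0 <= lam ->
  `|a - lam * c| <= th * lam -> k <= `|c| -> lam * (k - th) <= `|a|.
Proof.
move=> lam0 dist_a k_c; have := lerB_dist (lam * c) (lam * c - a).
have -> : lam * c - (lam * c - a) = a by ring.
rewrite distrC normrM ger0_norm //.
have : lam * k <= lam * `|c| by rewrite ler_wpM2l.
lra.
Qed.

Definition pball (R : realType) (m : nat) (u : 'cV[R]_m) (r : R) (x : 'cV[R]_m) : Prop :=
  dotv x x = 1 /\ 1 - dotv x u ^+ 2 <= r ^+ 2.

Section Constants.
Variables (R : realType) (l th : R).
Hypotheses (l_ge0 : 0 <= l) (l_lt1 : l < 1) (th_gt0 : 0 < th)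
  (th_le : th <= Num.sqrt ((1 - l) ^+ 3) / 40).
Let r : R := 2 * th / (1 - l).
Let rho : R := 1 - 4 / 5 * (1 - l).

Lemma rho_gt0 : 0 < rho.
Proof. by have := l_ge0; rewrite /rho; lra. Qed.

Lemma rho_lt1 : rho < 1.
Proof. by have := l_lt1; rewrite /rho; lra. Qed.

Lemma th_le_gap : th <= (1 - l) / 40.
Proof.
have gap : 0 <= 1 - l by rewrite subr_ge0 ltW.
apply: le_trans th_le _; rewrite ler_pM2r // sqrtr_leE // (exprS _ 2) ler_piMl ?exprn_ge0 //.
by have := l_ge0; lra.
Qed.

Lemma radius_ge0 : 0 <= r.
Proof. by rewrite /r divr_ge0 ?mulr_ge0 ?subr_ge0 // ltW. Qed.

Lemma radius_sqr_le : r ^+ 2 <= (1 - l) / 400.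
Proof.
have gap : 0 < 1 - l by rewrite subr_gt0.
have th2 : (th * 40) ^+ 2 <= (1 - l) ^+ 3.
  rewrite -(sqr_sqrtr (exprn_ge0 3 (ltW gap))) ler_sqr ?nnegrE ?sqrtr_ge0 ?mulr_ge0 //.
  - by rewrite -ler_pdivlMr.
  - exact: ltW.
rewrite /r expr_div_n ler_pdivrMr ?exprn_gt0 //.
by move: th2; rewrite !exprMn; lra.
Qed.

Lemma radius_gapE : r * (1 - l) = 2 * th.
Proof. by rewrite /r divfK // subr_eq0 gt_eqF. Qed.

Lemma cos_margin_gt0 : 0 < 1 - r ^+ 2 - th.
Proof. by have := th_le_gap; have := radius_sqr_le; have := l_ge0; lra. Qed.

Lemma invariance_margin : l * r + th <= r * (1 - r ^+ 2 - th).
Proof.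
have := radius_gapE; have := radius_ge0; have := th_le_gap; have := radius_sqr_le.
move=> r2 thl r0 rl.
have : r * (r ^+ 2 + th) <= r * (11 / 400 * (1 - l)) by rewrite ler_wpM2l //; lra.
nra.
Qed.

Lemma contraction_margin : l + th <= rho * ((1 - r ^+ 2 - th) * (1 - r ^+ 2)).
Proof.
have := th_le_gap; have := radius_sqr_le; have := rho_gt0; have := rho_lt1.
have := cos_margin_gt0; have := l_ge0; have := th_gt0; have := sqr_ge0 r.
rewrite /rho => r2_ge0 th0 l0 margin rho1 rho0 r2 thl.
have : 1 - 2 * r ^+ 2 - th <= (1 - r ^+ 2 - th) * (1 - r ^+ 2) by nra.
nra.
Qed.

Section Perturbation.
Variables (m : nat) (M E : 'M[R]_m) (u : 'cV[R]_m) (lam : R).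
Hypotheses (u_unit : dotv u u = 1) (M_sym : M^T = M) (M_u : M *m u = lam *: u)
  (M_orth : forall z, dotv z u = 0 -> vnorm (M *m z) <= l * lam * vnorm z)
  (E_small : forall v, vnorm (E *m v) <= th * lam * vnorm v) (lam_gt0 : 0 < lam).
Local Notation S := (M + E).

Lemma dotv_mulmx_eigen x : dotv (M *m x) u = lam * dotv x u.
Proof. by rewrite dotv_mulmx M_sym M_u dotvZr. Qed.

Lemma normr_dotv_perturbation_le x : dotv x x = 1 -> `|dotv (E *m x) u| <= th * lam.
Proof.
move=> x1; apply: le_trans (normr_dotv_le _ _) _.
have u1 : vnorm u = 1 by apply/unitvP.
have x1' : vnorm x = 1 by apply/unitvP.
by rewrite u1 mulr1; have := E_small x; rewrite x1' mulr1.
Qed.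

Lemma dotv_image_near x :
  dotv x x = 1 -> `|dotv (S *m x) u - lam * dotv x u| <= th * lam.
Proof.
by move=> x1; rewrite mulmxDl dotvDl dotv_mulmx_eigen addrAC subrr add0r normr_dotv_perturbation_le.
Qed.

Lemma pball_cos_ge x : pball u r x -> 1 - r ^+ 2 <= `|dotv x u|.
Proof.
move=> [x1 xr]; have c1 := sqr_dotv_unit_le u_unit x1.
rewrite -(real_normK (num_real (dotv x u))) in c1 xr.
have := normr_ge0 (dotv x u); nra.
Qed.

Lemma pball_image_cos_ge x : pball u r x -> lam * (1 - r ^+ 2 - th) <= `|dotv (S *m x) u|.
Proof.
move=> xG.
exact: norm_ge_perturbed (ltW lam_gt0) (dotv_image_near xG.1) (pball_cos_ge xG).
Qed.

Lemma pball_image_gt0 x : pball u r x -> 0 < dotv (S *m x) (S *m x).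
Proof.
move=> xG; have := sqr_dotv_le (S *m x) u; rewrite u_unit mulr1; apply: lt_le_trans.
rewrite -(real_normK (num_real (dotv (S *m x) u))) exprn_gt0 //.
exact: lt_le_trans (mulr_gt0 lam_gt0 cos_margin_gt0) (pball_image_cos_ge xG).
Qed.

Lemma pball_image_orth_le x : pball u r x ->
  vnorm (S *m x - dotv (S *m x) u *: u) <= lam * (l * r + th).
Proof.
move=> [x1 xr]; set c := dotv x u; set z := x - c *: u.
have -> : S *m x - dotv (S *m x) u *: u = M *m z + (E *m x - dotv (E *m x) u *: u).
  rewrite mulmxDl dotvDl dotv_mulmx_eigen /z mulmxBr -scalemxAr M_u scalerA -/c.
  by apply/matrixP => i j; rewrite !mxE; ring.
have z_r : vnorm z <= r.
  by rewrite sqrtr_leE ?radius_ge0 // dotv_sub_proj2 // x1 -expr2.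
have z_orth : dotv z u = 0 by exact: dotv_sub_proj.
have Ez : vnorm (E *m x - dotv (E *m x) u *: u) <= th * lam.
  apply: le_trans (vnorm_sub_proj_le u_unit _) _.
  by have := E_small x; rewrite (_ : vnorm x = 1) ?mulr1 //; apply/unitvP.
have Mz : vnorm (M *m z) <= l * lam * r.
  apply: le_trans (M_orth z_orth) _.
  by rewrite ler_wpM2l // mulr_ge0 // ltW.
by apply: le_trans (vnormD _ _) _; have := lerD Mz Ez; lra.
Qed.


Lemma pball_image x : pball u r x -> pball u r (pact S x).
Proof.
move=> xG; have Sx0 := pball_image_gt0 xG; split; first exact: pact_unit.
set A := dotv (S *m x) u; set q := S *m x - A *: u.
have q_le : dotv q q <= r ^+ 2 * A ^+ 2.
  rewrite -vnorm_sqr -(real_normK (num_real A)) -exprMn ler_sqr ?nnegrE ?vnorm_ge0 //; last first.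
    by rewrite mulr_ge0 ?radius_ge0.
  apply: le_trans (pball_image_orth_le xG) _.
  apply: le_trans (_ : lam * (r * (1 - r ^+ 2 - th)) <= _).
    by rewrite ler_wpM2l ?invariance_margin // ltW.
  by rewrite mulrCA ler_wpM2l ?radius_ge0 ?pball_image_cos_ge.
rewrite dotv_pactl expr_div_n vnorm_sqr -/A (dotv_proj_decomp u_unit) -/A -/q.
have -> : 1 - A ^+ 2 / (A ^+ 2 + dotv q q) = dotv q q / (A ^+ 2 + dotv q q).
  by field; rewrite -(dotv_proj_decomp u_unit) gt_eqF.
rewrite ler_pdivrMr; last by rewrite -(dotv_proj_decomp u_unit).
by have := mulr_ge0 (sqr_ge0 r) (dotv_ge0 q); lra.
Qed.

Lemma vnorm_image_orth_le z : dotv z u = 0 -> vnorm (S *m z) <= (l + th) * lam * vnorm z.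
Proof.
move=> z_orth; rewrite mulmxDl; apply: le_trans (vnormD _ _) _.
by have := M_orth z_orth; have := E_small z; lra.
Qed.

Lemma pball_orth_gain_le x y : pball u r x -> pball u r y ->
  (l + th) * lam <= rho * `|dotv (S *m y) u| * `|dotv x u|.
Proof.
move=> xG yG; have margin := cos_margin_gt0.
apply: le_trans (_ : rho * (lam * (1 - r ^+ 2 - th) * (1 - r ^+ 2)) <= _).
  have -> : rho * (lam * (1 - r ^+ 2 - th) * (1 - r ^+ 2)) =
      rho * ((1 - r ^+ 2 - th) * (1 - r ^+ 2)) * lam by ring.
  by rewrite ler_pM2r // contraction_margin.
rewrite -[rho * _ * _]mulrA ler_wpM2l ?(ltW rho_gt0) //.
apply: ler_pM (pball_image_cos_ge yG) (pball_cos_ge xG).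
  by rewrite mulr_ge0 ?(ltW lam_gt0) ?(ltW margin).
by have := th_gt0; lra.
Qed.

Lemma pball_contract x y : pball u r x -> pball u r y ->
  1 - dotv (pact S x) (pact S y) ^+ 2 <= rho ^+ 2 * (1 - dotv x y ^+ 2).
Proof.
move=> xG yG; set cx := dotv x u; set B := dotv (S *m y) u.
set s := dotv y u / cx; set z := y - s *: x.
have z_orth : dotv z u = 0.
  rewrite /z dotvBl dotvZl /s divfK ?subrr // -normr_gt0.
  by apply: lt_le_trans (pball_cos_ge xG); have := cos_margin_gt0; have := th_gt0; lra.
have Sz : dotv (S *m z) (S *m z) <= ((l + th) * lam) ^+ 2 * dotv z z.
  rewrite -!vnorm_sqr -exprMn ler_sqr ?nnegrE ?vnorm_image_orth_le ?vnorm_ge0 //.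
  by rewrite !mulr_ge0 ?vnorm_ge0 ?addr_ge0 ?(ltW th_gt0) ?(ltW lam_gt0).
have gain : ((l + th) * lam) ^+ 2 <= rho ^+ 2 * B ^+ 2 * cx ^+ 2.
  rewrite -(real_normK (num_real B)) -(real_normK (num_real cx)) -!exprMn.
  rewrite ler_sqr ?nnegrE ?pball_orth_gain_le //.
  - exact: mulr_ge0 (addr_ge0 l_ge0 (ltW th_gt0)) (ltW lam_gt0).
  - by rewrite !mulr_ge0 ?normr_ge0 ?(ltW rho_gt0).
have By : B ^+ 2 <= dotv (S *m y) (S *m y).
  by have := sqr_dotv_le (S *m y) u; rewrite u_unit mulr1.
have sin_xy := sin2_orth_le xG.1 yG.1 u_unit; rewrite -/cx -/s -/z in sin_xy.
apply: le_trans (sin2_pact_le s (pball_image_gt0 xG) (pball_image_gt0 yG)) _.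
rewrite ler_pdivrMr ?pball_image_gt0 // -/z.
have sin_ge0 : 0 <= 1 - dotv x y ^+ 2.
  by apply: le_trans sin_xy; rewrite mulr_ge0 ?sqr_ge0 ?dotv_ge0.
apply: le_trans Sz _; apply: le_trans (ler_wpM2r (dotv_ge0 z) gain) _.
apply: le_trans (_ : rho ^+ 2 * B ^+ 2 * (1 - dotv x y ^+ 2) <= _).
  by rewrite -[leLHS]mulrA ler_wpM2l // mulr_ge0 ?sqr_ge0.
by rewrite [leLHS]mulrAC ler_wpM2l // mulr_ge0 ?sqr_ge0.
Qed.

Lemma pdist_pact_le x y : pball u r x -> pball u r y ->
  pdist (pact S x) (pact S y) <= rho * pdist x y.
Proof.
move=> xG yG; have rho0 := rho_gt0.
rewrite /pdist -(ger0_norm (ltW rho0)) -sqrtr_sqr -sqrtrM ?sqr_ge0 // ler_sqrt.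
  exact: pball_contract.
rewrite mulr_ge0 ?sqr_ge0 // subr_ge0.
by have := sqr_dotv_le x y; rewrite xG.1 yG.1 mulr1.
Qed.

End Perturbation.

End Constants.

Lemma pballE (R : realType) (m : nat) (u x : 'cV[R]_m) (r : R) :
  0 <= r -> unitv x /\ pdist x u <= r <-> pball u r x.
Proof. by move=> r0; rewrite /pdist sqrtr_leE // /pball -unitvP. Qed.

Section IntegralBound.
Context d (T : measurableType d) (R : realType).
Local Open Scope ereal_scope.

(* The integrand of the theorem is not known to be measurable, so integrals are
   compared through their definition as a supremum over simple functions. *)
Lemma ge0_le_integral_nonmeasurable (mu : {measure set T -> \bar R}) (f g : T -> \bar R) :
  (forall w, 0 <= f w) -> (forall w, f w <= g w) ->
  \int[mu]_w f w <= \int[mu]_w g w.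
Proof.
move=> f0 fg; have g0 w : 0 <= g w := le_trans (f0 w) (fg w).
rewrite !ge0_integralTE //; apply: le_ereal_sup => _ [h hf <-].
by exists h => //= w; exact: le_trans (hf w) (fg w).
Qed.

Lemma integral_le_ae_bound (P : probability T R) (f : T -> R) (c : R) (A : T -> Prop) :
  {ae P, forall w, A w} -> (0 <= c)%R -> (forall w, 0 <= f w <= 1)%R ->
  (forall w, A w -> f w <= c)%R -> \int[P]_w (f w)%:E <= c%:E.
Proof.
move=> [N [mN PN0 notA_N]] c0 f01 fc.
set g := fun w => c%:E + (\1_N w)%:E.
have fg w : (f w)%:E <= g w.
  rewrite /g -EFinD lee_fin indicE; have [Nw|nNw] := boolP (w \in N).
    by case/andP: (f01 w) => _ f1; rewrite (le_trans f1) // lerDr.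
  rewrite addr0 fc //; apply: contrapT => notA; apply/negP: nNw.
  by rewrite negbK; apply: mem_set; exact: notA_N.
have -> : c%:E = \int[P]_w g w.
  rewrite ge0_integralD //; last first.
    apply/measurable_realfun.measurable_EFinP.
    exact: measurable_realfun.measurable_indic.
  rewrite integral_cst // integral_indic // setIT.
  rewrite [X in _ = _ + X](_ : _ = 0) ?adde0 //.
  by rewrite [X in _ = _ * X](_ : _ = 1) ?mule1 //; exact: probability_setT.
apply: ge0_le_integral_nonmeasurable _ fg => w.
by rewrite lee_fin; case/andP: (f01 w).
Qed.

End IntegralBound.

Theorem lemma5p2 (d : measure_display) (T : measurableType d) (R : realType)
  (P : probability T R) (n : nat)
  (M : 'M[R]_n.+2) (Q : 'M[R]_n.+2) (lam : 'I_n.+2 -> R)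
  (theta : R) (S : T -> 'M[R]_n.+2) :
  M^T = M ->
  Q^T *m Q = 1%:M ->
  M = Q *m diag_mx (\row_i lam i) *m Q^T ->
  (forall i j : 'I_n.+2, (i <= j)%N -> `|lam j| <= `|lam i|) ->
  0 < lam 0 ->
  `|lam 1| < lam 0 ->
  let u := col 0 Q in
  let l2 := `|lam 1| / lam 0 in
  0 < theta ->
  theta <= Num.sqrt ((1 - l2) ^+ 3) / 40 ->
  (forall i j, measurable_fun setT (fun w => S w i j)) ->
  (forall i j, (\int[P]_w (S w i j)%:E = (M i j)%:E)%E) ->
  {ae P, forall w, opnorm (S w - M) <= theta * opnorm M} ->
  {ae P, forall w, S w \in unitmx} ->
  (forall V : 'M[R]_n.+2, nontriv_proper_subsp V ->
     ~ {ae P, forall w, invariant_sub V (S w)}) ->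
  let G := fun x : 'cV[R]_n.+2 => unitv x /\ pdist x u <= 2 * theta / (1 - l2) in
  {ae P, forall w, forall x, G x -> G (pact (S w) x)} /\
  let rho := 1 - 4 / 5 * (1 - l2) in
  (0 < rho < 1) /\
  (forall x y, G x -> G y -> x <> y -> x <> - y ->
     (\int[P]_w (pdist (pact (S w) x) (pact (S w) y))%:E
        <= (rho * pdist x y)%:E)%E).
Proof.
move=> M_sym Q_orth M_diag lam_sorted lam0 gap u l2 th0 th_le _ _ near_M _ _ G.
have u_unit : dotv u u = 1 := col0_unit Q_orth.
have l2_ge0 : 0 <= l2 by rewrite divr_ge0 // ltW.
have l2_lt1 : l2 < 1 by rewrite ltr_pdivrMr // mul1r.
have M_orth z : dotv z u = 0 -> vnorm (M *m z) <= l2 * lam 0 * vnorm z.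
  by rewrite divfK ?gt_eqF //; exact: vnorm_mulmx_orth_le.
have M_le : opnorm M <= lam 0.
  apply: (opnorm_le (x0 := u)) => [|x x1]; first exact/unitvP.
  by have := vnorm_mulmx_spec_le Q_orth M_diag lam_sorted x; rewrite x1 mulr1 ger0_norm // ltW.
have E_small w : opnorm (S w - M) <= theta * opnorm M ->
    forall v, vnorm ((S w - M) *m v) <= theta * lam 0 * vnorm v.
  move=> near_w v; apply: (vnorm_mulmx_le (x0 := u)); first exact/unitvP.
  by apply: le_trans near_w _; rewrite ler_wpM2l // ltW.
have GE x : G x <-> pball u (2 * theta / (1 - l2)) x.
  by apply: pballE; exact: radius_ge0.
have M_u : M *m u = lam 0 *: u := mulmx_col0 Q_orth M_diag.
have S_split w : S w = M + (S w - M) by rewrite addrC subrK.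
split.
  apply: filterS near_M => w near_w x /GE xG; apply/GE; rewrite S_split.
  exact: (pball_image l2_ge0 l2_lt1 th0 th_le u_unit M_sym M_u M_orth (E_small _ near_w) lam0).
move=> rho; split; first by rewrite rho_gt0 ?rho_lt1.
move=> x y /GE xG /GE yG _ _.
apply: (integral_le_ae_bound near_M).
- exact: mulr_ge0 (ltW (rho_gt0 l2_ge0)) (sqrtr_ge0 _).
- by move=> w; rewrite sqrtr_ge0 sqrtr_leE // expr1n lerBlDr lerDl sqr_ge0.
move=> w near_w; rewrite S_split.
exact: (pdist_pact_le l2_ge0 l2_lt1 th0 th_le u_unit M_sym M_u M_orth (E_small _ near_w) lam0).
Qed.
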